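(* Let $n\in\mathbb{N}$, $N=2^{2n}$ and $1\le\kappa\le 2^n$. Any quantum algorithm that makes $T$ queries to $\varphi$ and $\varphi^{-1}$, where $\varphi\sim S_N^{\kappa}$ is a uniformly random permutation of $\{0,1\}^{2n}$ with exactly $\kappa$ zero pairs, and outputs a zero pair of $\varphi$ with probability $\epsilon>0$, satisfies $$\epsilon\le 2(T+1)\sqrt{\frac{\kappa}{2^n}}.$$
   Context: A zero pair of a permutation $\varphi$ of $\{0,1\}^{2n}$ is a pair $(x,y)\in\{0,1\}^n\times\{0,1\}^n$ with $\varphi(x\|0^n)=y\|0^n$; $S_N^{\kappa}$ is the set of permutations of $\{0,1\}^{2n}$ with exactly $\kappa$ zero pairs. Queries are to the unitaries $O_\varphi:|a\rangle|b\rangle\mapsto|a\rangle|b\oplus\varphi(a)\rangle$ and $O_{\varphi^{-1}}:|a\rangle|b\rangle\mapsto|a\rangle|b\oplus\varphi^{-1}(a)\rangle$. *)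

(* Quantum query model over an arbitrary numeric closed
   field C (e.g. algC, or R[i] for a real closed field R). *)
From HB Require Import structures.
From mathcomp Require Import all_boot all_order all_fingroup all_algebra.
Set Implicit Arguments. Unset Strict Implicit. Unset Printing Implicit Defensive.
Import Order.TTheory GRing.Theory Num.Theory.
Local Open Scope ring_scope.

Definition bits (m : nat) := (m.-tuple bool).

Definition bxor (m : nat) (u v : bits m) : bits m :=
  [tuple addb (tnth u i) (tnth v i) | i < m].

Definition pad0 (n : nat) (x : bits n) : bits (n + n) :=
  cat_tuple x (nseq_tuple n false).

Definition zero_pairs (n : nat) (phi : {perm bits (n + n)})
  : {set bits n * bits n} :=
  [set p | phi (pad0 p.1) == pad0 p.2].

Definition S_kappa (n kappa : nat) : {set {perm bits (n + n)}} :=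
  [set phi | #|zero_pairs phi| == kappa].

(* Basis of the algorithm's Hilbert space: query input register a,
   query output register b (both 2n bits), and workspace 'I_W.+1. *)
Definition basis (n W : nat) := (bits (n + n) * bits (n + n) * 'I_W.+1)%type.

Section Quantum.
Variable C : numClosedFieldType.
Variable S : finType.

Definition state := S -> C.
Definition op := S -> S -> C.

Definition apply (U : op) (v : state) : state :=
  fun s => \sum_(t : S) U s t * v t.

Definition ket (s0 : S) : state := fun s => (s == s0)%:R.

Definition unitary (U : op) : Prop :=
  forall t1 t2 : S, \sum_(s : S) (U s t1)^* * U s t2 = (t1 == t2)%:R.
End Quantum.

(* The standard oracle O_f : |a>|b>|w> -> |a>|b xor f(a)>|w> *)
Definition oracle (C : numClosedFieldType) (n W : nat)
  (f : bits (n + n) -> bits (n + n)) : op C (basis n W) :=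
  fun s' s => ((s'.1.1 == s.1.1) && (s'.1.2 == bxor s.1.2 (f s.1.1))
               && (s'.2 == s.2))%:R.

(* Run of a T-query algorithm: initial state |0^{2n}>|0^{2n}>|0>,
   then U_0, then for k = 0..T-1: the k-th query (to phi if c k = false,
   to phi^-1 if c k = true) followed by U_(k+1). *)
Fixpoint run (C : numClosedFieldType) (n W : nat) (U : nat -> op C (basis n W))
  (c : nat -> bool) (phi : {perm bits (n + n)}) (k : nat) : state C (basis n W) :=
  match k with
  | 0 => apply (U 0%N)
           (@ket C _ ((nseq_tuple (n + n) false, nseq_tuple (n + n) false), ord0))
  | k'.+1 => apply (U k)
           (apply (@oracle C n W (if c k' then fun x => (phi^-1)%g x else fun x => phi x))
                  (run U c phi k'))
  end.

(* probability that measuring the final state in the computational basis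
   and applying the classical post-processing out yields a zero pair *)
Definition success_prob (C : numClosedFieldType) (n W T : nat)
  (U : nat -> op C (basis n W)) (c : nat -> bool)
  (out : basis n W -> bits n * bits n) (phi : {perm bits (n + n)}) : C :=
  \sum_(s : basis n W | out s \in zero_pairs phi) `|run U c phi T s| ^+ 2.

Definition avg_success (C : numClosedFieldType) (n kappa W T : nat)
  (U : nat -> op C (basis n W)) (c : nat -> bool)
  (out : basis n W -> bits n * bits n) : C :=
  (\sum_(phi in S_kappa n kappa) success_prob T U c out phi) / #|S_kappa n kappa|%:R.

(* Let Z be the set of words x||0^n and H the group of permutations preserving
   Z.  Since S_N^kappa is a union of double cosets H phi H, it suffices to bound
   the success probability averaged over b * phi * a, for a, b in H and one phi
   with kappa zero pairs.  Composing phi with a permutation s that moves only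
   the kappa zero inputs and at most kappa further words yields phi1 without
   zero pairs.  For g in the stabiliser L of Z and of phi1^-1(Z), the
   permutation (g s^-1 g^-1) phi1 lies in the double coset of phi and agrees
   with phi1 outside g(supp s); as L acts transitively on Z and on phi1^-1(Z),
   a fixed word lies in g(supp s) for at most a kappa/2^n fraction of g in L.
   The hybrid argument and Cauchy-Schwarz then bound the averaged success
   probability by (2T + 1) sqrt(kappa / 2^n). *)

From mathcomp Require Import all_boot all_order all_fingroup all_algebra.
From mathcomp Require Import ring zify.
Import Order.TTheory GRing.Theory Num.Theory.
Set Implicit Arguments. Unset Strict Implicit. Unset Printing Implicit Defensive.

(** * Permutations preserving two disjoint sets *)

Section PermutationFacts.
Variable T : finType.
Local Open Scope group_scope.

Lemma astabs_permP (A : {set T}) (g : {perm T}) :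
  reflect (forall x, (g x \in A) = (x \in A)) (g \in 'N(A | 'P)).
Proof. by apply: (iffP astabsP) => gA x; apply: gA. Qed.

Lemma perm_exchange (D E : {set T}) : [disjoint D & E] -> (#|D| <= #|E|)%N ->
  exists s : {perm T}, [/\ forall x, x \notin D -> x \notin E -> s x = x,
    forall d, d \in D -> s d \in E &
    forall e, e \in E -> s e != e -> s e \in D].
Proof.
move Dk: #|D| => k; elim: k D E Dk => [|k IHk] D E Dk dDE leDE.
  exists 1; split=> [x _ _|d|e _]; rewrite ?perm1 ?eqxx //.
  by move/cards0_eq: Dk => ->; rewrite inE.
have /set0Pn[d dD] : D != set0 by rewrite -card_gt0 Dk.
have /set0Pn[e eE] : E != set0 by rewrite -card_gt0 (leq_trans _ leDE) ?Dk.
have dNE : d \notin E by rewrite (disjointFr dDE dD).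
have eND : e \notin D by rewrite (disjointFl dDE eE).
have Dk' : #|D :\ d| = k by move: Dk; rewrite (cardsD1 d) dD => -[].
have [||s [s_fix sDE sED]] := IHk (D :\ d) (E :\ e) Dk'.
- by apply: disjointWl (subsetDl _ _) _; apply: disjointWr (subsetDl _ _) dDE.
- by move: leDE; rewrite -Dk -Dk' (cardsD1 d D) (cardsD1 e E) dD eE.
have sd : s d = d by rewrite s_fix // !inE ?eqxx ?(negbTE dNE) ?andbF.
have se : s e = e by rewrite s_fix // !inE ?eqxx ?(negbTE eND) ?andbF.
exists (s * tperm d e); split.
- move=> x xD xE; rewrite permM s_fix ?inE ?(negbTE xD) ?(negbTE xE) ?andbF //.
  by rewrite tpermD //; [apply: contraNneq xD => <- | apply: contraNneq xE => <-].
- move=> x xD; rewrite permM; have [->|xd] := eqVneq x d; first by rewrite sd tpermL.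
  have /setD1P[sxe sxE] : s x \in E :\ e by apply: sDE; rewrite !inE xd.
  by rewrite tpermD //; [apply: contraNneq dNE => -> | rewrite eq_sym].
- move=> x xE; rewrite permM; have [->|xe] := eqVneq x e; first by rewrite se tpermR.
  have [sx|sx] := eqVneq (s x) x.
    by rewrite sx tpermD ?eqxx // 1?eq_sym //; apply: contraNneq dNE => <-.
  have /setD1P[sxd sxD] : s x \in D :\ d by apply: sED; rewrite ?inE ?xe.
  by rewrite tpermD // 1?eq_sym //; apply: contraNneq eND => <-.
Qed.

Lemma card_hits_orbit (G : {group {perm T}}) b (A : {set T}) :
  A \subset orbit 'P G b ->
  (#|[set g in G | g b \in A]| * #|orbit 'P G b| = #|A| * #|G|)%N.
Proof.
move=> sAorb.
suff -> : #|[set g in G | g b \in A]| = (#|A| * #|'C_G[b | 'P]|)%N.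
  by rewrite -(card_orbit_stab 'P G b); ring.
have fibre c : c \in orbit 'P G b -> #|[set g in G | g b == c]| = #|'C_G[b | 'P]|.
  case/orbitP => h hG <-{c}; rewrite -(card_rcoset 'C_G[b | 'P] h); apply: eq_card => g.
  rewrite mem_rcoset in_setI groupMr ?groupV // inE; congr (_ && _).
  by rewrite (sameP astab1P eqP) /= !apermE permM -[RHS](inj_eq (@perm_inj _ h)) permKV.
rewrite -sum1_card (partition_big (fun g : {perm T} => g b) (mem A)) /=; last first.
  by move=> g /[!inE] /andP[].
rewrite -sum_nat_const; apply: eq_bigr => c cA.
rewrite -(fibre c (subsetP sAorb c cA)) -sum1_card; apply: eq_bigl => g.
by rewrite !inE; case: eqP => [->|]; rewrite ?cA ?andbT ?andbF.
Qed.

Lemma orbit_astabs2 (A1 A2 : {set T}) b : [disjoint A1 & A2] -> b \in A1 ->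
  orbit 'P ('N(A1 | 'P) :&: 'N(A2 | 'P)) b = A1.
Proof.
move=> dA12 bA1; apply/setP => c; apply/orbitP/idP => [[g /setIP[/astabs_permP gA1 _] <-]|cA1].
  by rewrite gA1.
have pres_tperm (A : {set T}) : (b \in A) = (c \in A) -> tperm b c \in 'N(A | 'P).
  move=> bcA; apply/astabs_permP => x.
  by case: (tpermP b c x) => [->|->|].
exists (tperm b c); last by rewrite /= apermE tpermL.
by rewrite inE !pres_tperm ?bA1 ?cA1 ?(disjointFr dA12 bA1) ?(disjointFr dA12 cA1).
Qed.

Lemma card_hits_astabs2 (A1 A2 A : {set T}) b : [disjoint A1 & A2] -> b \in A1 ->
  A \subset A1 ->
  (#|[set g in 'N(A1 | 'P) :&: 'N(A2 | 'P) | g b \in A]| * #|A1|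
     = #|A| * #|'N(A1 | 'P) :&: 'N(A2 | 'P)|)%N.
Proof.
move=> dA12 bA1 sAA1.
by have := @card_hits_orbit ('N(A1 | 'P) :&: 'N(A2 | 'P))%G b A; rewrite orbit_astabs2 //; apply.
Qed.

Lemma card_moved_le (A1 A2 D E : {set T}) (s : {perm T}) b :
  [disjoint A1 & A2] -> #|A1| = #|A2| -> D \subset A1 -> E \subset A2 ->
  (#|E| <= #|D|)%N -> (forall x, s x != x -> x \in D :|: E) ->
  (#|[set g in 'N(A1 | 'P) :&: 'N(A2 | 'P) | s (g b) != g b]| * #|A1|
     <= #|D| * #|'N(A1 | 'P) :&: 'N(A2 | 'P)|)%N.
Proof.
move=> dA12 cardA12 sDA1 sEA2 leED s_supp.
have pres1 g x : g \in 'N(A1 | 'P) :&: 'N(A2 | 'P) -> (g x \in A1) = (x \in A1).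
  by case/setIP=> /astabs_permP.
have pres2 g x : g \in 'N(A1 | 'P) :&: 'N(A2 | 'P) -> (g x \in A2) = (x \in A2).
  by case/setIP=> _ /astabs_permP.
have [bA1|bNA1] := boolP (b \in A1).
  rewrite -(card_hits_astabs2 dA12 bA1 sDA1) leq_mul2r.
  apply/orP; right; apply/subset_leq_card/subsetP => g /setIdP[gL moved].
  rewrite inE gL; case/setUP: (s_supp _ moved) => // gbE.
  by move: (subsetP sEA2 _ gbE); rewrite (disjointFr dA12) // pres1.
have [bA2|bNA2] := boolP (b \in A2).
  have dA21 : [disjoint A2 & A1] by rewrite disjoint_sym.
  rewrite cardA12 setIC.
  apply: leq_trans (_ : #|E| * #|'N(A2 | 'P) :&: 'N(A1 | 'P)| <= _)%N; last first.
    by rewrite leq_mul2r leED orbT.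
  rewrite -(card_hits_astabs2 dA21 bA2 sEA2) leq_mul2r.
  apply/orP; right; apply/subset_leq_card/subsetP => g /setIdP[gL moved].
  rewrite inE gL; case/setUP: (s_supp _ moved) => // gbD.
  by move: (subsetP sDA1 _ gbD); rewrite pres1 ?(negbTE bNA1) // setIC.
suff -> : [set g in 'N(A1 | 'P) :&: 'N(A2 | 'P) | s (g b) != g b] = set0 by rewrite cards0.
apply/setP => g; rewrite in_set0 inE.
apply/andP => -[gL /s_supp /setUP[/(subsetP sDA1)|/(subsetP sEA2)]].
  by rewrite pres1 // (negbTE bNA1).
by rewrite pres2 // (negbTE bNA2).
Qed.

End PermutationFacts.

(** * Padded words and zero pairs *)

Section PaddedWords.
Variable n : nat.
Local Notation word := (bits (n + n)).
Local Open Scope group_scope.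

Lemma pad0_inj : injective (@pad0 n).
Proof.
move=> x y /(congr1 (fun t : word => take n (val t))).
by rewrite /= !take_size_cat ?size_tuple // => /val_inj.
Qed.

Definition padded : {set word} := @pad0 n @: [set: bits n].

Lemma padded_pad0 x : pad0 x \in padded.
Proof. exact: imset_f. Qed.

Lemma card_padded : #|padded| = (2 ^ n)%N.
Proof. by rewrite card_imset ?cardsT ?card_tuple ?card_bool //; apply: pad0_inj. Qed.

Definition zero_inputs (phi : {perm word}) : {set word} :=
  [set z in padded | phi z \in padded].

Lemma card_zero_pairs phi : #|zero_pairs phi| = #|zero_inputs phi|.
Proof.
rewrite -(@card_in_imset _ _ (fun xy : bits n * bits n => pad0 xy.1)).
  apply: eq_card => z; apply/imsetP/setIdP => [[[x y] /[!inE] /eqP phix ->]|].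
    by rewrite /= phix !padded_pad0.
  by case=> /imsetP[x _ ->] /imsetP[y _ phix]; exists (x, y); rewrite // inE phix.
move=> [x y] [x' y'] /[!inE] /eqP phix /eqP phix' /= /pad0_inj eq_x; subst x'.
by move: phix; rewrite /= phix' => /pad0_inj <-.
Qed.

Lemma card_zero_inputs_mul (a b phi : {perm word}) :
  a \in 'N(padded | 'P) -> b \in 'N(padded | 'P) ->
  #|zero_inputs (b * phi * a)| = #|zero_inputs phi|.
Proof.
move=> /astabs_permP aN /astabs_permP bN.
rewrite -(card_preimset (zero_inputs phi) (@perm_inj _ b)); apply: eq_card => z.
by rewrite !inE !permM aN bN.
Qed.

Lemma S_kappa_mul kappa (a b phi : {perm word}) :
  a \in 'N(padded | 'P) -> b \in 'N(padded | 'P) ->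
  (b * phi * a \in S_kappa n kappa) = (phi \in S_kappa n kappa).
Proof. by move=> aN bN; rewrite !inE !card_zero_pairs card_zero_inputs_mul. Qed.

(* Precomposing [phi] with a permutation [s] that sends each zero input into
   the set [W] of words that are neither padded nor mapped to padded words
   destroys all zero pairs; this needs #|W| >= #|zero_inputs phi|, i.e. n > 0. *)
Lemma zero_pair_free_shift (phi : {perm word}) : (0 < n)%N ->
  exists s : {perm word}, exists E : {set word},
  [/\ forall z, z \in padded -> (s * phi) z \notin padded,
      forall x, s x != x -> x \in zero_inputs phi :|: E,
      forall x, x \in E -> (s * phi) x \in padded &
      (#|E| <= #|zero_inputs phi|)%N].
Proof.
move=> n_gt0; set D := zero_inputs phi.
set W := [set u | (u \notin padded) && (phi u \notin padded)].
set P := [set u | phi u \in padded].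
have dDW : [disjoint D & W].
  by rewrite -setI_eq0; apply/eqP/setP => x; rewrite !inE; case: (x \in padded); rewrite ?andbF.
have cardW : #|W| = #|~: (padded :|: P)| by apply: eq_card => x; rewrite !inE negb_or.
have cardP : #|P| = #|padded|.
  by rewrite -(card_preimset padded (@perm_inj _ phi)); apply: eq_card => x; rewrite !inE.
have cardD : #|padded :&: P| = #|D| by apply: eq_card => x; rewrite !inE.
have cardU := cardsU padded P; have cardC := cardsC (padded :|: P).
have cardI : (#|padded :&: P| <= 2 ^ n)%N by rewrite -card_padded subset_leq_card ?subsetIl.
rewrite card_padded in cardP cardU.
rewrite card_tuple card_bool expnD in cardC.
have two_le : (2 <= 2 ^ n)%N by rewrite -{1}(expn1 2) leq_exp2l.
have [|s [s_fix sDW sWD]] := perm_exchange dDW; first by rewrite cardW; nia.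
exists s, [set w in W | s w != w]; split.
- move=> z zP; rewrite permM; have [zD|zND] := boolP (z \in D).
    by have /setIdP[] := sDW _ zD.
  by rewrite s_fix //; move: zND; rewrite !inE zP.
- move=> x; apply: contraR; rewrite in_setU negb_or => /andP[xND].
  rewrite in_set negb_and negbK => /orP[xNW|/eqP //]; exact/eqP/s_fix.
- by move=> x /setIdP[xW sx]; have /setIdP[] := sWD _ xW sx; rewrite permM.
- rewrite -(card_imset _ (@perm_inj _ s)); apply/subset_leq_card/subsetP => y.
  by case/imsetP=> x /setIdP[xW sx] ->; apply: sWD.
Qed.

End PaddedWords.

Local Open Scope ring_scope.

(** * Euclidean norms of states *)

Section FiniteNorms.
Variables (C : numClosedFieldType) (I : finType).

Lemma Cauchy_Schwarz_real (x y : I -> C) :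
  (forall i, x i \is Num.real) -> (forall i, y i \is Num.real) ->
  (\sum_i x i * y i) ^+ 2 <= (\sum_i x i ^+ 2) * (\sum_i y i ^+ 2).
Proof.
move=> xR yR.
have lagrange_identity : \sum_i \sum_j (x i * y j - x j * y i) ^+ 2 =
    2 * ((\sum_i x i ^+ 2) * (\sum_i y i ^+ 2) - (\sum_i x i * y i) ^+ 2).
  transitivity (\sum_i \sum_j (x i ^+ 2 * y j ^+ 2 + x j ^+ 2 * y i ^+ 2
                               - 2 * (x i * y i * (x j * y j)))).
    by apply: eq_bigr => i _; apply: eq_bigr => j _; ring.
  under eq_bigr do rewrite sumrB big_split /=.
  rewrite sumrB big_split /= [\sum_i \sum_j x j ^+ 2 * _]exchange_big /=.
  under [X in _ - X]eq_bigr do rewrite -mulr_sumr.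
  by rewrite -mulr_sumr -!big_distrlr /= expr2; ring.
have : 0 <= \sum_i \sum_j (x i * y j - x j * y i) ^+ 2.
  by do 2![apply: sumr_ge0 => ? _]; rewrite -realEsqr rpredB ?rpredM.
by rewrite lagrange_identity pmulr_rge0 // subr_ge0.
Qed.

Lemma Cauchy_Schwarz_ge0 (x y : I -> C) :
  (forall i, 0 <= x i) -> (forall i, 0 <= y i) ->
  \sum_i x i * y i <= sqrtC (\sum_i x i ^+ 2) * sqrtC (\sum_i y i ^+ 2).
Proof.
move=> x0 y0; have sqr_ge0 z : (forall i, 0 <= z i) -> 0 <= \sum_i z i ^+ 2 :> C.
  by move=> z0; apply: sumr_ge0 => i _; rewrite exprn_ge0.
rewrite -(ler_pXn2r (n := 2)) ?nnegrE ?mulr_ge0 ?sqrtC_ge0 ?sqr_ge0 //; last first.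
  by apply: sumr_ge0 => i _; rewrite mulr_ge0.
rewrite exprMn !sqrtCK.
by apply: Cauchy_Schwarz_real => i; rewrite ger0_real.
Qed.

Lemma sqr_sum_le_card (P : pred I) (x : I -> C) : (forall i, x i \is Num.real) ->
  (\sum_(i | P i) x i) ^+ 2 <= #|P|%:R * \sum_(i | P i) x i ^+ 2.
Proof.
move=> xR; pose xP i := if P i then x i else 0.
have -> : \sum_(i | P i) x i = \sum_i xP i * (P i)%:R.
  by rewrite big_mkcond; apply: eq_bigr => i _; rewrite /xP; case: (P i); rewrite ?mulr1 ?mul0r.
have -> : \sum_(i | P i) x i ^+ 2 = \sum_i xP i ^+ 2.
  by rewrite big_mkcond; apply: eq_bigr => i _; rewrite /xP; case: (P i); rewrite ?expr0n.
have -> : #|P|%:R = \sum_i ((P i)%:R : C) ^+ 2.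
  rewrite -sum1_card natr_sum big_mkcond; apply: eq_bigr => i _.
  by rewrite unfold_in; case: (P i); rewrite ?expr1n ?expr0n.
rewrite mulrC; apply: Cauchy_Schwarz_real => i; rewrite ?realn //.
by rewrite /xP; case: (P i); rewrite ?real0.
Qed.

Definition sqnorm (v : I -> C) := \sum_i `|v i| ^+ 2.
Definition norm2 (v : I -> C) := sqrtC (sqnorm v).

Lemma sqnorm_ge0 v : 0 <= sqnorm v.
Proof. by apply: sumr_ge0 => i _; rewrite exprn_ge0. Qed.

Lemma norm2_ge0 v : 0 <= norm2 v.
Proof. by rewrite sqrtC_ge0 sqnorm_ge0. Qed.

Lemma sqr_norm2 v : norm2 v ^+ 2 = sqnorm v.
Proof. exact: sqrtCK. Qed.

Lemma eq_norm2 u v : (forall i, `|u i| = `|v i|) -> norm2 u = norm2 v.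
Proof. by move=> uv; rewrite /norm2 /sqnorm; under eq_bigr do rewrite uv. Qed.

Lemma ler_norm2 u v : (forall i, `|u i| <= `|v i|) -> norm2 u <= norm2 v.
Proof.
move=> uv; rewrite ler_sqrtC ?nnegrE ?sqnorm_ge0 //; apply: ler_sum => i _.
by rewrite ler_pXn2r ?nnegrE.
Qed.

Lemma norm2D u v : norm2 (fun i => u i + v i) <= norm2 u + norm2 v.
Proof.
rewrite /norm2 -(ler_pXn2r (n := 2)) ?nnegrE ?sqrtC_ge0 ?sqnorm_ge0 ?addr_ge0 ?norm2_ge0 //.
rewrite sqrtCK sqrrD !sqrtCK.
apply: (@le_trans _ _ (\sum_i (`|u i| + `|v i|) ^+ 2)).
  by apply: ler_sum => i _; rewrite ler_pXn2r ?nnegrE ?addr_ge0 // ler_normD.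
under eq_bigr do rewrite sqrrD.
rewrite !big_split /= lerD2r lerD2l -mulr2n lerMn2r /=.
by apply: Cauchy_Schwarz_ge0 => i.
Qed.

Lemma norm2B u v : norm2 (fun i => u i - v i) <= norm2 u + norm2 v.
Proof.
apply: le_trans (norm2D u (fun i => - v i)) _.
by rewrite (eq_norm2 (u := fun i => - v i) (v := v)) // => i; rewrite normrN.
Qed.

End FiniteNorms.

(** * Queries and the hybrid argument *)

Section UnitaryEvolution.
Variables (C : numClosedFieldType) (S : finType).

Lemma sqnorm_unitary (U : op C S) (v : state C S) :
  unitary U -> sqnorm (apply U v) = sqnorm v.
Proof.
move=> unitU; rewrite /sqnorm /apply.
transitivity (\sum_t \sum_t' (v t)^* * v t' * \sum_s (U s t)^* * U s t').
  under eq_bigr do rewrite normCKC rmorph_sum big_distrlr /=.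
  rewrite exchange_big; apply: eq_bigr => t _; rewrite exchange_big /=.
  apply: eq_bigr => t' _; rewrite mulr_sumr; apply: eq_bigr => s _.
  by rewrite rmorphM /=; ring.
apply: eq_bigr => t _; under eq_bigr do rewrite unitU.
rewrite (bigD1 t) //= eqxx mulr1 normCKC mulrC big1 ?addr0 // => t'.
by rewrite eq_sym => /negbTE ->; rewrite mulr0.
Qed.

Lemma sqnorm_ket s0 : sqnorm (@ket C S s0) = 1.
Proof.
rewrite /sqnorm (bigD1 s0) //= /ket eqxx normr1 expr1n big1 ?addr0 // => s /negbTE ->.
by rewrite normr0 expr0n.
Qed.

Lemma applyB (U : op C S) (a b : state C S) s :
  apply U (fun t => a t - b t) s = apply U a s - apply U b s.
Proof. by rewrite /apply -sumrB; apply: eq_bigr => t _; rewrite mulrBr. Qed.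

Definition proj (P : pred S) (v : state C S) : state C S :=
  fun s => if P s then v s else 0.

Lemma norm2_proj_le P v : norm2 (proj P v) <= norm2 v.
Proof. by apply: ler_norm2 => s; rewrite /proj; case: ifP; rewrite ?normr0. Qed.

End UnitaryEvolution.

Lemma bxorK m (v : bits m) : involutive (fun u => bxor u v).
Proof.
move=> u; apply: eq_from_tnth => i; rewrite /bxor !tnth_mktuple.
by rewrite -addbA addbb addbF.
Qed.

Section Queries.
Variables (C : numClosedFieldType) (n W : nat).
Local Notation S := (basis n W).
Local Notation word := (bits (n + n)).

(* The oracle is the permutation matrix of the involution [oracle_flip f]. *)
Definition oracle_flip (f : word -> word) (s : S) : S :=
  ((s.1.1, bxor s.1.2 (f s.1.1)), s.2).

Lemma oracle_flipK f : involutive (oracle_flip f).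
Proof. by move=> [[a b] w]; rewrite /oracle_flip /= bxorK. Qed.

Lemma apply_oracle f (v : state C S) s : apply (@oracle C n W f) v s = v (oracle_flip f s).
Proof.
rewrite /apply /oracle (bigD1 (oracle_flip f s)) //= bxorK !eqxx mul1r big1 ?addr0 //.
move=> [[a b] w] /= neq_flip; apply/eqP; rewrite mulf_eq0 pnatr_eq0 eqb0; apply/orP; left.
apply: contra neq_flip => /andP[/andP[/eqP ea /eqP eb] /eqP ew].
by rewrite /oracle_flip ea eb bxorK ew.
Qed.

Lemma sqnorm_oracle f (v : state C S) : sqnorm (apply (@oracle C n W f) v) = sqnorm v.
Proof.
rewrite /sqnorm; under eq_bigr do rewrite apply_oracle.
by rewrite (reindex_inj (inv_inj (oracle_flipK f))); under eq_bigr do rewrite oracle_flipK.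
Qed.

Lemma norm2_oracle_sub f f' (v : state C S) :
  norm2 (fun s => apply (@oracle C n W f) v s - apply (@oracle C n W f') v s)
  <= 2 * norm2 (proj (fun s => f s.1.1 != f' s.1.1) v).
Proof.
set v' := proj _ v.
rewrite (@eq_norm2 _ _ _ (fun s => apply (@oracle C n W f) v' s - apply (@oracle C n W f') v' s)).
  apply: le_trans (norm2B _ _) _.
  by rewrite /norm2 !sqnorm_oracle mulr2n mulrDl mul1r.
move=> s; rewrite !apply_oracle /v' /proj /oracle_flip /=.
by case: eqP => [->|]; rewrite ?subrr.
Qed.

Definition query (c : nat -> bool) (phi : {perm word}) (j : nat) : word -> word :=
  if c j then fun x => (phi^-1)%g x else fun x => phi x.

Lemma runS (U : nat -> op C S) c phi k :
  run U c phi k.+1 = apply (U k.+1) (apply (@oracle C n W (query c phi k)) (run U c phi k)).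
Proof. by []. Qed.

Lemma sqnorm_run (U : nat -> op C S) c phi k :
  (forall i, (i <= k)%N -> unitary (U i)) -> sqnorm (run U c phi k) = 1.
Proof.
elim: k => [|k IHk] unitU /=; first by rewrite sqnorm_unitary ?sqnorm_ket //; apply: unitU.
rewrite sqnorm_unitary ?sqnorm_oracle; last exact: unitU.
by apply: IHk => i le_ik; apply/unitU/leqW.
Qed.

Lemma norm2_run (U : nat -> op C S) c phi k :
  (forall i, (i <= k)%N -> unitary (U i)) -> norm2 (run U c phi k) = 1.
Proof. by move=> unitU; rewrite /norm2 sqnorm_run ?sqrtC1. Qed.

(* The hybrid argument of Bennett, Bernstein, Brassard and Vazirani. *)
Lemma hybrid_bound (U : nat -> op C S) c phi phi' k :
  (forall i, (i <= k)%N -> unitary (U i)) ->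
  norm2 (fun s => run U c phi k s - run U c phi' k s) <=
  2 * \sum_(j < k) norm2 (proj (fun s => query c phi j s.1.1 != query c phi' j s.1.1)
                               (run U c phi' j)).
Proof.
elim: k => [|k IHk] unitU.
  rewrite big_ord0 mulr0 /norm2 /sqnorm big1 ?sqrtC0 // => s _.
  by rewrite subrr normr0 expr0n.
set O := fun phi => apply (@oracle C n W (query c phi k)).
rewrite !runS (@eq_norm2 _ _ _ (apply (U k.+1) (fun t =>
    O phi (fun s => run U c phi k s - run U c phi' k s) t +
    (O phi (run U c phi' k) t - O phi' (run U c phi' k) t)))); last first.
  move=> s; rewrite -applyB; congr `|_|; apply: eq_bigr => t _; congr (_ * _).
  by rewrite /O !apply_oracle addrA subrK.
rewrite /norm2 sqnorm_unitary -/(norm2 _); last exact: unitU.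
apply: le_trans (norm2D _ _) _.
rewrite big_ord_recr /= mulrDr; apply: lerD; last exact: norm2_oracle_sub.
by rewrite /norm2 /O sqnorm_oracle; apply: IHk => i le_ik; apply/unitU/leqW.
Qed.

Lemma success_prob_le (U : nat -> op C S) c out phi phi' T :
  (forall i, (i <= T)%N -> unitary (U i)) ->
  success_prob T U c out phi <=
  norm2 (proj (fun s => out s \in zero_pairs phi) (run U c phi' T)) +
  norm2 (fun s => run U c phi T s - run U c phi' T s).
Proof.
move=> unitU; set P := fun s => out s \in zero_pairs phi.
have -> : success_prob T U c out phi = norm2 (proj P (run U c phi T)) ^+ 2.
  rewrite sqr_norm2 /success_prob /sqnorm /proj big_mkcond /=.
  by apply: eq_bigr => s _; rewrite /P; case: ifP; rewrite ?normr0 ?expr0n.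
have le1 : norm2 (proj P (run U c phi T)) <= 1.
  by rewrite -(norm2_run c phi unitU) norm2_proj_le.
apply: (@le_trans _ _ (norm2 (proj P (run U c phi T)))).
  by rewrite expr2 ler_piMr ?norm2_ge0.
rewrite (@eq_norm2 _ _ _ (fun s => proj P (run U c phi' T) s +
    (proj P (run U c phi T) s - proj P (run U c phi' T) s))); last first.
  by move=> s; rewrite addrC subrK.
apply: le_trans (norm2D _ _) _; rewrite lerD2l; apply: ler_norm2 => s.
by rewrite /proj; case: ifP; rewrite ?subrr ?normr0.
Qed.

Lemma success_prob_le1 (U : nat -> op C S) c out phi T :
  (forall i, (i <= T)%N -> unitary (U i)) -> success_prob T U c out phi <= 1.
Proof.
move=> unitU; rewrite -(sqnorm_run c phi unitU) /success_prob /sqnorm.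
rewrite [X in _ <= X](bigID (fun s => out s \in zero_pairs phi)) /= lerDl.
by apply: sumr_ge0 => s _; rewrite exprn_ge0.
Qed.

End Queries.

Section FamilyAverages.
Variables (C : numClosedFieldType) (n W : nat) (G : finType).
Local Notation S := (basis n W).
Local Notation word := (bits (n + n)).

Lemma sum_norm2_proj_le (L : pred G) (Q : G -> pred S) (v : state C S) (p : C) :
  sqnorm v = 1 -> 0 <= p ->
  (forall s, (#|[pred g | L g && Q g s]|%:R : C) <= p * #|L|%:R) ->
  \sum_(g | L g) norm2 (proj (Q g) v) <= #|L|%:R * sqrtC p.
Proof.
move=> unit_v p_ge0 fewQ.
have sum_sqr : \sum_(g | L g) norm2 (proj (Q g) v) ^+ 2 <= p * #|L|%:R.
  under eq_bigr do rewrite sqr_norm2.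
  rewrite /sqnorm exchange_big /=.
  apply: (@le_trans _ _ (\sum_s `|v s| ^+ 2 * (p * #|L|%:R))); last first.
    by rewrite -mulr_suml -/(sqnorm v) unit_v mul1r.
  apply: ler_sum => s _.
  have -> : \sum_(g | L g) `|proj (Q g) v s| ^+ 2 =
            `|v s| ^+ 2 * #|[pred g | L g && Q g s]|%:R.
    rewrite -sum1_card natr_sum mulr_sumr big_mkcondr /= big_mkcond [RHS]big_mkcond /=.
    apply: eq_bigr => g _; rewrite /proj.
    by case: (L g) => //=; case: (Q g s); rewrite ?mulr1 ?normr0 ?expr0n.
  by rewrite ler_wpM2l ?exprn_ge0.
rewrite -(ler_pXn2r (n := 2)) ?nnegrE ?mulr_ge0 ?sqrtC_ge0 //; last first.
  by apply: sumr_ge0 => g _; apply: norm2_ge0.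
apply: le_trans (sqr_sum_le_card _ _) _ => [g|]; first by rewrite ger0_real ?norm2_ge0.
by rewrite exprMn sqrtCK expr2 -mulrA ler_wpM2l // mulrC.
Qed.

Lemma sum_success_prob_le (U : nat -> op C S) c out (phi : G -> {perm word})
    (phi' : {perm word}) (L : pred G) T (p : C) :
  (forall i, (i <= T)%N -> unitary (U i)) -> 0 <= p ->
  (forall j a, (#|[pred g | L g && (query c (phi g) j a != query c phi' j a)]|%:R : C)
                 <= p * #|L|%:R) ->
  (forall xy, (#|[pred g | L g && (xy \in zero_pairs (phi g))]|%:R : C) <= p * #|L|%:R) ->
  \sum_(g | L g) success_prob T U c out (phi g) <= #|L|%:R * sqrtC p * (2 * T%:R + 1).
Proof.
move=> unitU p_ge0 few_diff few_zero.
apply: (@le_trans _ _ (\sum_(g | L g)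
    (norm2 (proj (fun s => out s \in zero_pairs (phi g)) (run U c phi' T)) +
     2 * \sum_(j < T) norm2 (proj (fun s => query c (phi g) j s.1.1 != query c phi' j s.1.1)
                                 (run U c phi' j))))).
  apply: ler_sum => g _; apply: le_trans (success_prob_le _ _ _ phi' unitU) _.
  by rewrite lerD2l hybrid_bound.
rewrite big_split /= -mulr_sumr exchange_big /= mulrDr mulr1 [X in _ <= X]addrC.
apply: lerD.
  by apply: sum_norm2_proj_le => //; apply: sqnorm_run.
rewrite mulrCA ler_wpM2l // mulr_natr -[X in _ *+ X]card_ord -sumr_const.
apply: ler_sum => j _; apply: sum_norm2_proj_le => //.
by apply: sqnorm_run => i le_ij; apply/unitU/ltnW/(leq_ltn_trans le_ij).
Qed.

End FamilyAverages.

(** * Averaging over double cosets *)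

Lemma sum_double_coset_mul (gT : finGroupType) (R : nmodType) (G : {group gT})
    (F : gT -> R) (h1 h2 x : gT) : h1 \in G -> h2 \in G ->
  \sum_(a in G) \sum_(b in G) F (b * (h1 * x * h2) * a)%g =
  \sum_(a in G) \sum_(b in G) F (b * x * a)%g.
Proof.
move=> Gh1 Gh2; rewrite [RHS](reindex_inj (mulgI h2)) /=.
apply: eq_big => [a|a _]; first by rewrite groupMl.
rewrite (reindex_astabs 'R h1^-1) ?astabsR ?groupV //=; apply: eq_bigr => b _.
by rewrite !mulgA mulgKV.
Qed.

Lemma sum_double_coset_invariant (gT : finGroupType) (R : nmodType) (G : {group gT})
    (S : {set gT}) (F : gT -> R) :
  (forall a b x, a \in G -> b \in G -> ((b * x * a)%g \in S) = (x \in S)) ->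
  \sum_(x in S) \sum_(a in G) \sum_(b in G) F (b * x * a)%g =
  (\sum_(x in S) F x) *+ (#|G| * #|G|).
Proof.
move=> S_inv; rewrite exchange_big mulrnA -!sumr_const; apply: eq_bigr => a aG.
rewrite exchange_big; apply: eq_bigr => b bG /=.
rewrite [RHS](reindex_inj (h := fun x => (b * x * a)%g)) /=; last by move=> x y /mulIg /mulgI.
by apply: eq_bigl => x; rewrite S_inv.
Qed.

Section ShiftedFamily.
Variables (C : numClosedFieldType) (n W T : nat).
Variables (U : nat -> op C (basis n W)) (c : nat -> bool) (out : basis n W -> bits n * bits n).
Hypothesis unitU : forall i, (i <= T)%N -> unitary (U i).
Local Notation word := (bits (n + n)).
Local Notation succ := (success_prob T U c out).
Local Notation H := ('N(padded n | 'P))%g.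

Variables (phi0 s : {perm word}) (E : {set word}).
Hypotheses (s_kills : forall z, z \in padded n -> (s * phi0)%g z \notin padded n)
  (s_supp : forall x, s x != x -> x \in zero_inputs phi0 :|: E)
  (s_E : forall x, x \in E -> (s * phi0)%g x \in padded n)
  (card_E : (#|E| <= #|zero_inputs phi0|)%N).

Let phi1 := (s * phi0)%g.
Let V := [set v | phi1 v \in padded n].
Local Notation L := ('N(padded n | 'P) :&: 'N(V | 'P))%g.
Let p : C := #|zero_inputs phi0|%:R / (2 ^ n)%:R.

Lemma card_shift_moved b : (#|[set g in L | s (g b) != g b]|%:R : C) <= p * #|L|%:R.
Proof.
have dV : [disjoint padded n & V].
  rewrite -setI_eq0; apply/eqP/setP => z; rewrite !inE.
  by case: (boolP (z \in padded n)) => // /s_kills /negbTE.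
have cardV : #|padded n| = #|V|.
  by rewrite -(card_preimset _ (@perm_inj _ phi1)); apply: eq_card => z; rewrite !inE.
have sDV : zero_inputs phi0 \subset padded n by apply/subsetP => z /setIdP[].
have sEV : E \subset V by apply/subsetP => z /s_E; rewrite inE.
have := card_moved_le b dV cardV sDV sEV card_E s_supp.
rewrite card_padded /p mulrAC ler_pdivlMr ?ltr0n ?expn_gt0 // -!natrM ler_nat; apply.
Qed.

Let shift (g : {perm word}) := (g * s^-1 * g^-1 * phi1)%g.

Lemma shift_agree (a b g : {perm word}) x : s (g (b x)) = g (b x) ->
  (b * shift g * a)%g x = (b * phi1 * a)%g x.
Proof.
by move=> s_fix; rewrite !permM -{1}s_fix !permK.
Qed.

Lemma double_coset_shift g : g \in L ->
  \sum_(a in H) \sum_(b in H) succ (b * phi0 * a)%g =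
  \sum_(a in H) \sum_(b in H) succ (b * shift g * a)%g.
Proof.
case/setIP=> gH /astabs_permP gV.
have conjH : (phi1^-1 * g * phi1)%g \in H.
  apply/astabs_permP => z; rewrite !permM.
  have phi1V w : (phi0 (s w) \in padded n) = (w \in V) by rewrite inE permM.
  by rewrite phi1V gV inE permKV.
have -> : phi0 = (g^-1 * shift g * (phi1^-1 * g * phi1))%g.
  by rewrite /shift /phi1 invMg !mulgA mulVg mul1g mulgK mulgK mulgKV mulVg mul1g.
by rewrite sum_double_coset_mul ?groupV.
Qed.

Lemma sum_shift_family_le (a b : {perm word}) : a \in H -> b \in H ->
  \sum_(g in L) succ (b * shift g * a)%g <= #|L|%:R * sqrtC p * (2 * T%:R + 1).
Proof.
move=> /astabs_permP aH /astabs_permP bH.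
have -> : #|L| = #|[pred g | g \in L]| by apply: eq_card.
apply: (@sum_success_prob_le _ _ _ _ U c out _ (b * phi1 * a)%g) => //.
- by rewrite divr_ge0 ?ler0n.
- move=> j x; set y := if c j then b (((b * phi1 * a)^-1)%g x) else b x.
  apply: le_trans (card_shift_moved y); rewrite ler_nat.
  apply/subset_leq_card/subsetP => g /andP[gL differ]; rewrite inE gL /=.
  apply: contra differ => /eqP fixed; rewrite /query /y in fixed *.
  case: (c j) fixed => fixed; apply/eqP; last exact: shift_agree.
  by apply: (canLR (permK _)); rewrite shift_agree // permKV.
- move=> [x y]; apply: le_trans (card_shift_moved (b (pad0 x))); rewrite ler_nat.
  apply/subset_leq_card/subsetP => g /andP[gL zero]; rewrite inE gL /=.
  apply: contraL zero => /eqP fixed; rewrite inE /= shift_agree // permM.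
  apply: contraTneq (padded_pad0 y) => <-.
  by rewrite aH permM; apply: s_kills; rewrite bH padded_pad0.
Qed.

Lemma double_coset_success_le :
  \sum_(a in H) \sum_(b in H) succ (b * phi0 * a)%g
    <= (#|H| * #|H|)%:R * (sqrtC p * (2 * T%:R + 1)).
Proof.
have L_gt0 : (0 : C) < #|L|%:R by rewrite ltr0n card_gt0; apply/set0Pn; exists 1%g; apply: group1.
rewrite -(ler_pM2l L_gt0) [X in X <= _]mulr_natl -[X in X <= _]sumr_const.
under eq_bigr => g gL do rewrite (double_coset_shift gL).
rewrite exchange_big /=.
apply: le_trans (_ : \sum_(a in H) \sum_(b in H) #|L|%:R * sqrtC p * (2 * T%:R + 1) <= _).
  apply: ler_sum => a aH; rewrite exchange_big /=; apply: ler_sum => b bH.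
  exact: sum_shift_family_le.
rewrite !sumr_const -mulrnA -[X in X <= _]mulr_natr le_eqVlt natrM.
apply/orP; left; apply/eqP; ring.
Qed.

End ShiftedFamily.

Lemma double_coset_success_le_zero_inputs (C : numClosedFieldType) (n W T : nat)
    (U : nat -> op C (basis n W)) (c : nat -> bool) (out : basis n W -> bits n * bits n)
    (phi : {perm bits (n + n)}) :
  (0 < n)%N -> (forall i, (i <= T)%N -> unitary (U i)) ->
  \sum_(a in ('N(padded n | 'P))%g) \sum_(b in ('N(padded n | 'P))%g)
      success_prob T U c out (b * phi * a)%g
    <= (#|('N(padded n | 'P))%g| * #|('N(padded n | 'P))%g|)%:R *
       (sqrtC (#|zero_inputs phi|%:R / (2 ^ n)%:R) * (2 * T%:R + 1)).
Proof.
move=> n_gt0 unitU; have [s [E [s_kills s_supp s_E card_E]]] := zero_pair_free_shift phi n_gt0.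
exact: (double_coset_success_le c out unitU s_kills s_supp s_E card_E).
Qed.

Lemma mean_le (R : numFieldType) (I : finType) (A : {set I}) (F : I -> R) (B : R) :
  0 <= B -> \sum_(i in A) F i <= #|A|%:R * B -> (\sum_(i in A) F i) / #|A|%:R <= B.
Proof.
move=> B_ge0 sum_le; have [/cards0_eq->|A_gt0] := posnP #|A|.
  by rewrite big_set0 mul0r.
by rewrite ler_pdivrMr ?ltr0n // mulrC.
Qed.

Theorem lemma4 (C : numClosedFieldType) (n kappa T W : nat)
  (U : nat -> op C (basis n W)) (c : nat -> bool)
  (out : basis n W -> bits n * bits n) :
  (1 <= kappa)%N -> (kappa <= 2 ^ n)%N ->
  (forall i, (i <= T)%N -> unitary (U i)) ->
  0 < avg_success kappa T U c out ->
  avg_success kappa T U c out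
    <= 2 * (T.+1)%:R * sqrtC (kappa%:R / (2 ^ n)%:R).
Proof.
move=> kappa_ge1 kappa_le unitU _.
have sqrt_ge0 : 0 <= sqrtC (kappa%:R / (2 ^ n)%:R : C) by rewrite sqrtC_ge0 divr_ge0 ?ler0n.
apply: mean_le; first by rewrite !mulr_ge0 ?ler0n.
have [n0|n_gt0] := posnP n.
  have kappa1 : kappa = 1%N by move: kappa_le; rewrite n0; lia.
  rewrite kappa1 [in (2 ^ n)%N]n0 divr1 sqrtC1 mulr1 mulrC.
  apply: le_trans (_ : \sum_(phi in S_kappa n 1) 1 <= _).
    by apply: ler_sum => phi _; apply: success_prob_le1.
  by rewrite sumr_const -!natrM ler_nat leq_pmull.
set H := ('N(padded n | 'P))%g.
have H_gt0 : (0 : C) < (#|H| * #|H|)%:R.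
  by rewrite ltr0n muln_gt0 andbb card_gt0; apply/set0Pn; exists 1%g; apply: group1.
rewrite -(ler_pM2l H_gt0) [X in X <= _]mulr_natl.
rewrite -sum_double_coset_invariant => [|a b phi aH bH]; last exact: S_kappa_mul.
apply: le_trans (_ : \sum_(phi in S_kappa n kappa)
    (#|H| * #|H|)%:R * (sqrtC (kappa%:R / (2 ^ n)%:R) * (2 * T%:R + 1)) <= _).
  apply: ler_sum => phi; rewrite inE card_zero_pairs => /eqP <-.
  exact: double_coset_success_le_zero_inputs.
rewrite sumr_const -mulrnAr ler_wpM2l ?ler0n // -mulr_natl ler_wpM2l ?ler0n //.
by rewrite mulrC ler_wpM2r // -[1 : C]/(1%:R) -!natrM -natrD ler_nat; lia.
Qed.
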